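(* For each $s=1,2,\dots$, let $B_s$ be the set of indices selected at exploration round $s$ and $\mathbf{q}_s$ the associated probability vector. Then $$\forall i\in[d],\quad\mathbb{P}[i\in B_s]=\frac{d-k}{d-1}q_{s,i}+\frac{k-1}{d-1},$$ $$\forall i\ne j\in[d],\quad\mathbb{P}[i,j\in B_s]=\frac1{g_{d,k}}+\frac{d-k}{(k-2)g_{d,k}}(q_{s,i}+q_{s,j}),$$ $$\forall\text{ pairwise distinct }i,j,r\in[d],\quad\mathbb{P}[i,j,r\in B_s]=\frac1{g_{d,k}}\cdot\frac{k-3}{d-3}+\frac1{g_{d,k}}\cdot\frac{d-k}{d-3}(q_{s,i}+q_{s,j}+q_{s,r}).$$ Moreover, $\mathbb{E}_s[\hat{\mathbf{x}}_{s^2}]=\mathbf{x}_{s^2}$ and $\mathbb{E}_s[\mathbf{h}_{s^2}]=\mathbf{x}_{s^2}\mathbf{x}_{s^2}^\top$, where $\mathbb{E}_s[\cdot]=\mathbb{E}[\cdot\mid B_1,\dots,B_{s-1}]$ is taken with respect to $B_s$.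
   Context: Integers $3\le k\le d-3$, $[d]=\{1,\dots,d\}$, $g_{d,k}=\frac{(d-1)(d-2)}{(k-1)(k-2)}$. SAMPLING$(k,d,\mathbf{w})$ for nonzero $\mathbf{w}\in\mathbb{R}^d$: with $q_i=|w_i|/\|\mathbf{w}\|_1$, draw $I_1\in[d]$ with $\mathbb{P}(I_1=i)=q_i$, then $k-1$ distinct indices uniformly without replacement from $[d]\setminus\{I_1\}$; output the $k$-set $B$. At exploration round $s$ a nonzero vector $\hat{\mathbf{w}}_{s-1}\in\mathbb{R}^d$ determined by $B_1,\dots,B_{s-1}$ is given ($\hat{\mathbf{w}}_0=\frac1d\mathbf{1}_d$), $q_{s,i}=|\hat w_{s-1,i}|/\|\hat{\mathbf{w}}_{s-1}\|_1$ and $B_s=$SAMPLING$(k,d,\hat{\mathbf{w}}_{s-1})$; all probabilities are over $B_s$ conditional on $B_1,\dots,B_{s-1}$. An instance $\mathbf{x}_{s^2}\in\mathbb{R}^d$ (fixed given the past) is observed on $B_s$ and $\hat x_{s^2,i}=\frac{x_{s^2,i}}{\mathbb{P}[i\in B_s]}\mathbb{I}_{i\in B_s}$, $h_{s^2}[i,i]=\frac{x_{s^2,i}^2}{\mathbb{P}[i\in B_s]}\mathbb{I}_{i\in B_s}$, $h_{s^2}[i,j]=\frac{x_{s^2,i}x_{s^2,j}}{\mathbb{P}[i,j\in B_s]}\mathbb{I}_{i,j\in B_s}$ for $i\ne j$. *)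

From mathcomp Require Import all_boot all_order all_algebra.
Set Implicit Arguments. Unset Strict Implicit. Unset Printing Implicit Defensive.
Import Order.TTheory GRing.Theory Num.Theory.
Local Open Scope ring_scope.

Section Sampling.
Variables (R : realFieldType) (d k : nat).
Implicit Types (w x : 'cV[R]_d) (S : {set 'I_d}).

Definition l1norm w : R := \sum_(j < d) `|w j 0|.
Definition qprob w (i : 'I_d) : R := `|w i 0| / l1norm w.

(* Joint law of (I_1, B) produced by SAMPLING(k,d,w):
   P(I_1 = i) = q_i, then the remaining k-1 indices form a uniformly random
   (k-1)-subset of [d] \ {i} (there are 'C(d-1,k-1) of them); B = {i} u rest. *)
Definition sampling_joint w (i : 'I_d) S : R :=
  qprob w i *
  (if (i \in S) && (#|S| == k) then ('C(d.-1, k.-1)%:R)^-1 else 0).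

Definition sampling_prob w S : R := \sum_(i < d) sampling_joint w i S.

Definition Pr w (E : pred {set 'I_d}) : R :=
  \sum_(S : {set 'I_d} | E S) sampling_prob w S.
Definition Expect (m n : nat) w (F : {set 'I_d} -> 'M[R]_(m, n)) : 'M[R]_(m, n) :=
  \sum_(S : {set 'I_d}) sampling_prob w S *: F S.

Definition incl1 w (i : 'I_d) : R := Pr w [pred S : {set 'I_d} | i \in S].
Definition incl2 w (i j : 'I_d) : R := Pr w [pred S : {set 'I_d} | (i \in S) && (j \in S)].
Definition incl3 w (i j r : 'I_d) : R :=
  Pr w [pred S : {set 'I_d} | [&& i \in S, j \in S & r \in S]].

Definition xhat w x S : 'cV[R]_d :=
  \col_i (if i \in S then x i 0 / incl1 w i else 0).
Definition hmat w x S : 'M[R]_d :=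
  \matrix_(i, j)
    if i == j then (if i \in S then x i 0 ^+ 2 / incl1 w i else 0)
    else (if (i \in S) && (j \in S) then x i 0 * x j 0 / incl2 w i j else 0).

End Sampling.

Definition gdk (R : realFieldType) (d k : nat) : R :=
  ((d - 1) * (d - 2))%:R / ((k - 1) * (k - 2))%:R.

From mathcomp Require Import all_boot all_order all_algebra.
From mathcomp Require Import zify ring.
Set Implicit Arguments. Unset Strict Implicit. Unset Printing Implicit Defensive.
Import Order.TTheory GRing.Theory Num.Theory.
Local Open Scope ring_scope.

(* A k-set B contains a t-set T with probability sum_i q_i N(|T u {i}|) / N(1),
   where N(t) = 'C(d - t, d - k) counts the k-sets containing a given t-set
   (their complements are the (d - k)-subsets of the complement).  Splitting on
   whether i lies in T and using N(t + 1) = (k - t) / (d - t) N(t) gives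
   P[T c B] = N(t) / N(1) * ((k - t) + (d - k) Q_T) / (d - t), Q_T = sum_(i in T) q_i,
   which is the three formulas for t = 1, 2, 3.  The estimators are unbiased
   because each entry is an indicator divided by its own probability. *)

Lemma card_ksupsets d k (A : {set 'I_d}) : (k <= d)%N ->
  #|[set S : {set 'I_d} | A \subset S & #|S| == k]| = 'C(d - #|A|, d - k).
Proof.
move=> kd.
have -> : [set S : {set 'I_d} | A \subset S & #|S| == k] =
          @setC _ @^-1: [set B : {set 'I_d} | B \subset ~: A & #|B| == (d - k)%N].
  apply/setP => S; rewrite !inE setCS; congr (_ && _).
  have := cardsC S; have := max_card S; rewrite !card_ord => ? ?.
  by apply/eqP/eqP; lia.
rewrite card_preimset; last exact: setC_inj.
by rewrite cards_draws; have := cardsC A; rewrite card_ord => dA; congr (_ _ _); lia.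
Qed.

Lemma mul_bin_supsets d k t : (k <= d)%N ->
  ((d - t) * 'C(d - t.+1, d - k) = (k - t) * 'C(d - t, d - k))%N.
Proof.
move=> kd; rewrite subnS mul_bin_down; congr (_ * _)%N; lia.
Qed.

Lemma sum_weights_cardsU1 (R : pzRingType) (I : finType) (F : I -> R) (G : nat -> R)
    (T : {set I}) :
  \sum_i F i = 1 ->
  \sum_i F i * G #|i |: T| =
  (\sum_(i in T) F i) * G #|T| + (1 - \sum_(i in T) F i) * G #|T|.+1.
Proof.
move=> F1; have -> : 1 - \sum_(i in T) F i = \sum_(i | i \notin T) F i.
  by rewrite -F1 (bigID (mem T)) /= addrC addrK.
rewrite (bigID (mem T)) /= !mulr_suml.
by congr (_ + _); apply: eq_bigr => i iT; rewrite cardsU1 iT.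
Qed.

Section InclusionProbabilities.
Variables (R : realFieldType) (d k : nat) (w : 'cV[R]_d).

Lemma qprob_ge0 i : 0 <= qprob w i.
Proof. by rewrite divr_ge0 // sumr_ge0. Qed.

Lemma eq_Pr (E1 E2 : pred {set 'I_d}) : E1 =1 E2 -> Pr k w E1 = Pr k w E2.
Proof. by move=> eqE; apply: eq_bigl. Qed.

Lemma Pr_supset_sum (T : {set 'I_d}) : (k <= d)%N ->
  Pr k w [pred S : {set 'I_d} | T \subset S] =
  \sum_i qprob w i * ('C(d - #|i |: T|, d - k)%:R / 'C(d.-1, k.-1)%:R).
Proof.
move=> kd; rewrite /Pr /sampling_prob exchange_big; apply: eq_bigr => i _.
rewrite -mulr_sumr -big_mkcondr sumr_const; congr (_ * _).
rewrite -(card_ksupsets (i |: T) kd) mulrC mulr_natr; congr (_ *+ _); apply: eq_card => S.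
by rewrite unfold_in !inE subUset sub1set /= andbA [X in X && _]andbC.
Qed.

Hypothesis w_neq0 : w != 0.

Lemma sum_qprob : \sum_i qprob w i = 1.
Proof.
rewrite -mulr_suml divff //; apply: contra w_neq0.
rewrite psumr_eq0 // => /allP w0; apply/eqP/matrixP => i j.
by rewrite ord1 mxE; apply/eqP; rewrite -normr_eq0 (implyP (w0 i _)) ?mem_index_enum.
Qed.

Hypotheses (k_gt0 : (0 < k)%N) (k_lt_d : (k < d)%N).

Lemma bin_supsets_ratio t : (t < d)%N ->
  'C(d - t.+1, d - k)%:R = (k - t)%:R / (d - t)%:R * 'C(d - t, d - k)%:R :> R.
Proof.
move=> td; have dt : (d - t)%:R != 0 :> R by rewrite pnatr_eq0; lia.
apply: (mulfI dt); rewrite -natrM mul_bin_supsets ?natrM; last exact: ltnW.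
by field.
Qed.

Lemma Pr_supsetE (T : {set 'I_d}) : (#|T| <= k)%N ->
  Pr k w [pred S : {set 'I_d} | T \subset S] =
  'C(d - #|T|, d - k)%:R / 'C(d - 1, d - k)%:R *
  (((k - #|T|)%:R + (d - k)%:R * \sum_(i in T) qprob w i) / (d - #|T|)%:R).
Proof.
move=> Tk; rewrite Pr_supset_sum; last exact: ltnW.
rewrite (@sum_weights_cardsU1 _ _ (qprob w)
          (fun t => 'C(d - t, d - k)%:R / 'C(d.-1, k.-1)%:R)) ?sum_qprob //.
have -> : 'C(d.-1, k.-1) = 'C(d - 1, d - k).
  by rewrite -!subn1 -bin_sub; [congr 'C(_, _)|]; lia.
have dkE : (d - k)%:R = (d - #|T|)%:R - (k - #|T|)%:R :> R.
  by rewrite -natrB; [congr _%:R|]; lia.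
rewrite (bin_supsets_ratio (t := #|T|)) ?dkE; last lia.
by field; rewrite !pnatr_eq0 -!lt0n bin_gt0; apply/andP; split; lia.
Qed.

Lemma Pr_supset_gt0 (T : {set 'I_d}) : (#|T| < k)%N ->
  0 < Pr k w [pred S : {set 'I_d} | T \subset S].
Proof.
move=> Tk; rewrite Pr_supsetE; last exact: ltnW.
apply: mulr_gt0; apply: divr_gt0; rewrite ?ltr0n ?bin_gt0; try lia.
apply: ltr_wpDr; rewrite ?ltr0n ?subn_gt0 //.
by rewrite mulr_ge0 ?sumr_ge0 // => i _; apply: qprob_ge0.
Qed.

Lemma incl1_supset i : incl1 k w i = Pr k w [pred S : {set 'I_d} | [set i] \subset S].
Proof. by apply: eq_Pr => S; rewrite /= sub1set. Qed.

Lemma incl2_supset i j :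
  incl2 k w i j = Pr k w [pred S : {set 'I_d} | [set i; j] \subset S].
Proof. by apply: eq_Pr => S; rewrite /= subUset !sub1set. Qed.

Lemma incl3_supset i j r :
  incl3 k w i j r = Pr k w [pred S : {set 'I_d} | [set i; j; r] \subset S].
Proof. by apply: eq_Pr => S; rewrite /= !subUset !sub1set andbA. Qed.

Lemma incl1E i :
  incl1 k w i = (d - k)%:R / (d - 1)%:R * qprob w i + (k - 1)%:R / (d - 1)%:R.
Proof.
rewrite incl1_supset Pr_supsetE cards1 ?big_set1 //.
by field; rewrite !pnatr_eq0 -!lt0n bin_gt0; apply/andP; split; lia.
Qed.

Hypothesis k_ge3 : (3 <= k)%N.

Lemma incl2E i j : i != j ->
  incl2 k w i j = 1 / gdk R d k
                  + (d - k)%:R / ((k - 2)%:R * gdk R d k) * (qprob w i + qprob w j).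
Proof.
move=> ij; rewrite incl2_supset Pr_supsetE cards2 ij /=; last lia.
rewrite big_setU1 ?inE //= big_set1 (bin_supsets_ratio (t := 1)); last lia.
rewrite /gdk !natrM; field; rewrite !pnatr_eq0 -!lt0n bin_gt0; do ?split; lia.
Qed.

Lemma incl3E i j r : i != j -> i != r -> j != r ->
  incl3 k w i j r = 1 / gdk R d k * ((k - 3)%:R / (d - 3)%:R)
           + 1 / gdk R d k * ((d - k)%:R / (d - 3)%:R) * (qprob w i + qprob w j + qprob w r).
Proof.
move=> ij ir jr; have iNjr : i \notin [set j; r] by rewrite !inE negb_or ij ir.
have jNr : j \notin [set r] by rewrite inE.
rewrite incl3_supset -setUA Pr_supsetE !cardsU1 iNjr jNr cards1 /=; last lia.
rewrite !big_setU1 //= big_set1 (bin_supsets_ratio (t := 2)); last lia.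
rewrite (bin_supsets_ratio (t := 1)); last lia.
rewrite /gdk !natrM; field; rewrite !pnatr_eq0 -!lt0n bin_gt0; do ?split; lia.
Qed.

End InclusionProbabilities.

Section Unbiasedness.
Variables (R : realFieldType) (d k : nat) (w : 'cV[R]_d).

Lemma Expect_entry m n (F : {set 'I_d} -> 'M[R]_(m, n)) i j :
  Expect k w F i j = \sum_S sampling_prob k w S * F S i j.
Proof. by rewrite summxE; apply: eq_bigr => S _; rewrite mxE. Qed.

Lemma sum_prob_scaled_event (E : pred {set 'I_d}) (c : R) : Pr k w E != 0 ->
  \sum_S sampling_prob k w S * (if E S then c / Pr k w E else 0) = c.
Proof.
move=> PE; under eq_bigr => S _ do rewrite (fun_if (GRing.mul _)) mulr0.
by rewrite -big_mkcond -mulr_suml -/(Pr k w E) mulrCA divff ?mulr1.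
Qed.

Lemma Expect_xhat x : (forall i, incl1 k w i != 0) -> Expect k w (xhat k w x) = x.
Proof.
move=> incl1_neq0; apply/matrixP => i j; rewrite ord1 Expect_entry.
under eq_bigr do rewrite mxE.
exact: sum_prob_scaled_event (incl1_neq0 i).
Qed.

Lemma Expect_hmat x : (forall i, incl1 k w i != 0) ->
  (forall i j, i != j -> incl2 k w i j != 0) -> Expect k w (hmat k w x) = x *m x^T.
Proof.
move=> incl1_neq0 incl2_neq0; apply/matrixP => i j.
rewrite Expect_entry !mxE big_ord1 !mxE.
under eq_bigr do rewrite mxE.
have [<-|ij] := eqVneq i j.
  by rewrite -expr2; exact: sum_prob_scaled_event (incl1_neq0 i).
exact: sum_prob_scaled_event (incl2_neq0 i j ij).
Qed.

End Unbiasedness.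

Theorem lemma9 (R : realFieldType) (d k : nat)
  (hk3 : (3 <= k)%N) (hkd : (k <= d - 3)%N)
  (w x : 'cV[R]_d) (hw : w != 0) :
  let q := qprob w in
  let g := gdk R d k in
  [/\ (forall i : 'I_d,
        incl1 k w i = (d - k)%:R / (d - 1)%:R * q i + (k - 1)%:R / (d - 1)%:R),
      (forall i j : 'I_d, i != j ->
        incl2 k w i j = 1 / g + (d - k)%:R / ((k - 2)%:R * g) * (q i + q j)),
      (forall i j r : 'I_d, i != j -> i != r -> j != r ->
        incl3 k w i j r = 1 / g * ((k - 3)%:R / (d - 3)%:R)
                          + 1 / g * ((d - k)%:R / (d - 3)%:R) * (q i + q j + q r)),
      Expect k w (xhat k w x) = x
    & Expect k w (hmat k w x) = x *m x^T].
Proof.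
move=> q g.
have k_gt0 : (0 < k)%N by lia.
have k_lt_d : (k < d)%N by lia.
have incl1_neq0 i : incl1 k w i != 0.
  by rewrite incl1_supset gt_eqF // Pr_supset_gt0 // cards1; lia.
have incl2_neq0 i j : i != j -> incl2 k w i j != 0.
  by move=> ij; rewrite incl2_supset gt_eqF // Pr_supset_gt0 // cards2 ij.
split.
- exact: incl1E.
- exact: incl2E.
- exact: incl3E.
- exact: Expect_xhat.
- exact: Expect_hmat.
Qed.
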